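(* Let $\mathbf S,\mathbf M\in\mathbb R^{d\times d}$ be symmetric positive definite, $\mathbf T$ symmetric positive semi-definite, $\sigma>0$, $n\ge1$, and $\mathbf S'=\mathbf M^{-1/2}\mathbf S\mathbf M^{-1/2}$, $\mathbf T'=\mathbf M^{-1/2}\mathbf T\mathbf M^{-1/2}$. Then $$\sup_{\substack{\mathbf F\succ\mathbf 0\\ \operatorname{tr}\mathbf F\le 1/\pi^2}}\Big\langle\mathbf T',\Big(\mathbf F^{-1}+\frac{n\mathbf S'}{\sigma^2}\Big)^{-1}\Big\rangle=\inf_{\mathbf A\in\mathbb R^{d\times d}}\ \frac1{\pi^2}\big\|(\mathbf I-\mathbf A)^\top\mathbf T'(\mathbf I-\mathbf A)\big\|+\frac{\sigma^2}{n}\big\langle\mathbf T',\mathbf A(\mathbf S')^{-1}\mathbf A^\top\big\rangle .$$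
   Context: $\|\cdot\|$ denotes the spectral norm, $\langle\mathbf A,\mathbf B\rangle=\operatorname{tr}(\mathbf A^\top\mathbf B)$, and the supremum ranges over symmetric positive definite matrices $\mathbf F$ with trace (equivalently nuclear norm) at most $1/\pi^2$. *)

From HB Require Import structures.
From mathcomp Require Import all_boot all_order all_algebra.
From mathcomp Require Import all_classical all_reals all_analysis.
Set Implicit Arguments. Unset Strict Implicit. Unset Printing Implicit Defensive.
Import Order.TTheory GRing.Theory Num.Theory.
Local Open Scope classical_set_scope.
Local Open Scope ring_scope.

Section Defs.
Context {R : realType} {d : nat}.

Definition symmx (A : 'M[R]_d) : Prop := A^T = A.

Definition qform (A : 'M[R]_d) (v : 'cV[R]_d) : R := (v^T *m A *m v) ord0 ord0.

Definition posdefmx (A : 'M[R]_d) : Prop :=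
  symmx A /\ forall v : 'cV[R]_d, v != 0 -> 0 < qform A v.
Definition psdmx (A : 'M[R]_d) : Prop :=
  symmx A /\ forall v : 'cV[R]_d, 0 <= qform A v.

Definition frob (A B : 'M[R]_d) : R := \tr (A^T *m B).

Definition vnorm (v : 'cV[R]_d) : R := Num.sqrt ((v^T *m v) ord0 ord0).

Definition spec_norm (B : 'M[R]_d) : R :=
  sup [set vnorm (B *m v) | v in [set v : 'cV[R]_d | vnorm v = 1]].

End Defs.

From HB Require Import structures.
From mathcomp Require Import all_boot all_order all_algebra.
From mathcomp Require Import all_classical all_reals all_analysis.
From mathcomp Require Import ring lra.
Import Order.TTheory GRing.Theory Num.Theory.
Local Open Scope classical_set_scope.
Local Open Scope ring_scope.

(* Write P = (n / sigma^2) S', N = P^-1 and W_F = (F + N)^-1, so that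
   (F^-1 + P)^-1 = N - N W_F N.  For every A, completing the square gives
     (I - A) F (I - A)^T + A N A^T = (F^-1 + P)^-1 + E (F + N) E^T,
   E = A - F W_F, hence <T', (F^-1 + P)^-1> <= <B_A, F> + <T', A N A^T> with
   B_A = (I - A)^T T' (I - A), and <B_A, F> <= tr F * ||B_A||: this is the easy
   inequality, with equality in the first step at A = F W_F.
   Conversely, let F0 be nearly optimal and A0 = F0 W_F0.  Moving F0 towards the
   rank-one point tau v v^T / |v|^2 (tau = 1 / pi^2) changes the objective, by the resolvent
   identity, by t (tau v^T B_A0 v / |v|^2 - <B_A0, F0>) up to a second-order
   term bounded uniformly on the feasible set; near-optimality then forces
   tau ||B_A0|| <= <B_A0, F0> + delta, so the infimum is at most the supremum. *)

Section MatrixInequalities.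
Context {R : realType} {d : nat}.
Implicit Types (A B : 'M[R]_d) (u v w x : 'cV[R]_d).

Definition bform A u v : R := (u^T *m A *m v) 0 0.

Definition sqnorm v : R := (v^T *m v) 0 0.

Lemma bformDl A u1 u2 v : bform A (u1 + u2) v = bform A u1 v + bform A u2 v.
Proof. by rewrite /bform linearD /= !mulmxDl mxE. Qed.

Lemma bformDr A u v1 v2 : bform A u (v1 + v2) = bform A u v1 + bform A u v2.
Proof. by rewrite /bform !mulmxDr mxE. Qed.

Lemma bformZl A a u v : bform A (a *: u) v = a * bform A u v.
Proof. by rewrite /bform linearZ /= -!scalemxAl mxE. Qed.

Lemma bformZr A a u v : bform A u (a *: v) = a * bform A u v.
Proof. by rewrite /bform -!scalemxAr mxE. Qed.

Lemma bform_addmx A B u v : bform (A + B) u v = bform A u v + bform B u v.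
Proof. by rewrite /bform mulmxDr mulmxDl mxE. Qed.

Lemma bform_scalemx a A u v : bform (a *: A) u v = a * bform A u v.
Proof. by rewrite /bform -scalemxAr -scalemxAl mxE. Qed.

Lemma bform_submx A B u v : bform (A - B) u v = bform A u v - bform B u v.
Proof. by rewrite -scaleN1r bform_addmx bform_scalemx mulN1r. Qed.

Lemma bform0l A v : bform A 0 v = 0.
Proof. by rewrite /bform trmx0 !mul0mx mxE. Qed.

Lemma bform_mulmxr A B u v : bform (A *m B) u v = bform A u (B *m v).
Proof. by rewrite /bform !mulmxA. Qed.

Lemma bform_congr A B u v : bform A (B *m u) (B *m v) = bform (B^T *m A *m B) u v.
Proof. by rewrite /bform trmx_mul !mulmxA. Qed.

Lemma bform_sym A u v : symmx A -> bform A u v = bform A v u.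
Proof.
move=> hA; rewrite /bform; transitivity (((u^T *m A *m v)^T) 0 0).
  by rewrite [in RHS]mxE.
by rewrite !trmx_mul trmxK hA mulmxA.
Qed.

Lemma bform_delta A i j : bform A (delta_mx i 0) (delta_mx j 0) = A i j.
Proof. by rewrite /bform trmx_delta -rowE -colE !mxE. Qed.

Lemma bform_outer x y u v : bform (x *m y^T) u v = bform 1%:M u x * bform 1%:M y v.
Proof. by rewrite /bform !mulmx1 !mulmxA -(mulmxA (u^T *m x)) mxE big_ord1. Qed.

Lemma qformE A v : qform A v = bform A v v.
Proof. by []. Qed.

Lemma sqnormE v : sqnorm v = bform 1%:M v v.
Proof. by rewrite /bform mulmx1. Qed.

Lemma symmx1 : symmx (1%:M : 'M[R]_d).
Proof. exact: trmx1. Qed.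

Lemma frob_sym A B : symmx A -> frob A B = \tr (A *m B).
Proof. by rewrite /frob => ->. Qed.

Lemma bform_expand A u v s : symmx A ->
  bform A (u + s *: v) (u + s *: v) = bform A u u + 2 * s * bform A u v + s ^+ 2 * bform A v v.
Proof. by move=> hA; rewrite !bformDl !bformDr !bformZl !bformZr (bform_sym _ v u hA); ring. Qed.

Lemma psd_bform_ge0 A v : psdmx A -> 0 <= bform A v v.
Proof. by case=> _; apply. Qed.

(* The discriminant of the nonnegative quadratic [s |-> bform A (u + s v) (u + s v)]. *)
Lemma psd_cauchy_schwarz A u v : psdmx A ->
  bform A u v ^+ 2 <= bform A u u * bform A v v.
Proof.
move=> hA; set a := bform A u u; set b := bform A u v; set c := bform A v v.
have ha : 0 <= a := psd_bform_ge0 _ u hA.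
have hc : 0 <= c := psd_bform_ge0 _ v hA.
have quad s : 0 <= a + 2 * s * b + s ^+ 2 * c.
  by rewrite -bform_expand ?psd_bform_ge0 //; case: hA.
have [c0|c_neq0] := eqVneq c 0.
  have [->|b_neq0] := eqVneq b 0; first by rewrite expr0n mulr_ge0.
  have := quad (- (a + 1) / (2 * b)); rewrite c0 mulr0 addr0.
  have -> : 2 * (- (a + 1) / (2 * b)) * b = - (a + 1) by field.
  lra.
have c_gt0 : 0 < c by rewrite lt_def c_neq0.
have := quad (- b / c).
have -> : a + 2 * (- b / c) * b + (- b / c) ^+ 2 * c = a - b ^+ 2 / c.
  by field.
by rewrite subr_ge0 ler_pdivrMr // mulrC.
Qed.

Lemma psd_diag_eq0 A i j : psdmx A -> A i i = 0 -> A i j = 0.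
Proof.
move=> hA Aii0; have := psd_cauchy_schwarz _ (delta_mx i 0) (delta_mx j 0) hA.
rewrite !bform_delta Aii0 mul0r => h.
by apply/eqP; rewrite -sqrf_eq0 eq_le h sqr_ge0.
Qed.

Lemma psd_zero_diag_eq0 A : psdmx A -> (forall i, A i i = 0) -> A = 0.
Proof. by move=> hA h; apply/matrixP => i j; rewrite mxE (psd_diag_eq0 _ _ j hA (h i)). Qed.

Lemma psd_outer v : psdmx (v *m v^T).
Proof.
split; first by rewrite /symmx trmx_mul trmxK.
by move=> w; rewrite qformE bform_outer (bform_sym _ v w symmx1) -expr2 sqr_ge0.
Qed.

Lemma psd_scale a A : 0 <= a -> psdmx A -> psdmx (a *: A).
Proof.
move=> ha hA; split; first by rewrite /symmx linearZ /= hA.1.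
by move=> v; rewrite qformE bform_scalemx mulr_ge0 ?psd_bform_ge0.
Qed.

Lemma psd_congr B A : psdmx A -> psdmx (B^T *m A *m B).
Proof.
move=> hA; split; first by rewrite /symmx !trmx_mul trmxK hA.1 mulmxA.
by move=> v; rewrite qformE -bform_congr psd_bform_ge0.
Qed.

(* One step of a Cholesky-type elimination: subtracting the rank-one matrix
   [x x^T] built from a column with [A i i > 0] keeps [A] psd and clears [A i i]. *)
Lemma psd_sub_pivot A i : psdmx A -> 0 < A i i ->
  let x := Num.sqrt (A i i)^-1 *: (A *m (delta_mx i 0 : 'cV_d)) in
  psdmx (A - x *m x^T) /\ forall j, x j 0 = Num.sqrt (A i i)^-1 * A j i.
Proof.
move=> hA Aii_gt0 x; split; last by move=> j; rewrite /x -colE !mxE.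
split; first by rewrite /symmx linearB /= trmx_mul trmxK hA.1.
move=> v; rewrite qformE bform_submx bform_outer (bform_sym _ x v symmx1).
have -> : bform 1%:M v x = Num.sqrt (A i i)^-1 * bform A v (delta_mx i 0).
  by rewrite /x bformZr -bform_mulmxr mul1mx.
set b := bform A v (delta_mx i 0 : 'cV_d); set s := Num.sqrt _.
have s2 : s ^+ 2 = (A i i)^-1 by rewrite sqr_sqrtr // invr_ge0 ltW.
have := psd_cauchy_schwarz _ v (delta_mx i 0) hA; rewrite bform_delta -/b => hcs.
have -> : s * b * (s * b) = b ^+ 2 / A i i by rewrite -s2; ring.
by rewrite subr_ge0 ler_pdivrMr.
Qed.

Lemma psd_sum_outer A : psdmx A -> exists s : seq 'cV[R]_d, A = \sum_(x <- s) x *m x^T.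
Proof.
move=> hA; suff /(_ d (leqnn d)) [s [hs s0]] : forall k, (k <= d)%N ->
    exists s : seq 'cV[R]_d, psdmx (A - \sum_(x <- s) x *m x^T) /\
    forall i : 'I_d, (i < k)%N -> (A - \sum_(x <- s) x *m x^T) i i = 0.
  by exists s; apply/eqP; rewrite -subr_eq0; apply/eqP/psd_zero_diag_eq0 => // i; apply: s0.
elim=> [|k IHk] lt_kd; first by exists [::]; rewrite big_nil subr0.
have [s [hB B0]] := IHk (ltnW lt_kd); set B := A - _ in hB B0.
pose i0 : 'I_d := Ordinal lt_kd.
have [Bi0|Bi_neq0] := eqVneq (B i0 i0) 0.
  exists s; split=> // i; rewrite ltnS leq_eqVlt => /orP[/eqP ik|]; last exact: B0.
  by rewrite (_ : i = i0) //; apply: val_inj.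
have Bi_gt0 : 0 < B i0 i0 by rewrite lt_def Bi_neq0 -bform_delta psd_bform_ge0.
have [hpiv xE] := psd_sub_pivot _ _ hB Bi_gt0; set x := _ *: _ in hpiv xE.
exists (x :: s); rewrite big_cons opprD addrA addrAC -/B; split=> // i.
have entry_ii : (B - x *m x^T) i i = B i i - x i 0 ^+ 2.
  have subE (M N : 'M[R]_d) : (M - N) i i = M i i - N i i by rewrite !mxE.
  by rewrite subE [(x *m _) _ _]mxE big_ord1 [x^T _ _]mxE expr2.
rewrite entry_ii xE ltnS leq_eqVlt => /orP[/eqP ik|lt_ik].
  rewrite (_ : i = i0); last exact: val_inj.
  by rewrite exprMn sqr_sqrtr ?invr_ge0 ?ltW // expr2 mulrA mulVf ?mul1r ?subrr // gt_eqF.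
by rewrite (psd_diag_eq0 _ _ _ hB (B0 i lt_ik)) B0 // mulr0 expr0n subr0.
Qed.

Lemma sqnorm_ge0 v : 0 <= sqnorm v.
Proof. by rewrite /sqnorm mxE sumr_ge0 // => i _; rewrite mxE -expr2 sqr_ge0. Qed.

Lemma sqnorm_gt0 v : v != 0 -> 0 < sqnorm v.
Proof.
move=> v_neq0; rewrite lt_def sqnorm_ge0 andbT; apply: contra v_neq0.
rewrite /sqnorm mxE => /eqP/psumr_eq0P v0; apply/eqP/matrixP => i j.
have /eqP : v^T 0 i * v i 0 = 0 by apply: v0 => // k _; rewrite mxE -expr2 sqr_ge0.
by rewrite mxE -expr2 sqrf_eq0 (ord1 j) mxE => /eqP.
Qed.

Lemma sqnormZ a v : sqnorm (a *: v) = a ^+ 2 * sqnorm v.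
Proof. by rewrite !sqnormE bformZl bformZr mulrA expr2. Qed.

Lemma sqnorm_sub_le u v : sqnorm (u - v) <= 2 * sqnorm u + 2 * sqnorm v.
Proof.
have := sqnorm_ge0 (u + 1 *: v).
rewrite -scaleN1r !sqnormE !(bform_expand _ _ _ _ symmx1) sqrrN expr1n; lra.
Qed.

Lemma psd1 : psdmx (1%:M : 'M[R]_d).
Proof. by split; [exact: symmx1 | move=> v; rewrite qformE -sqnormE sqnorm_ge0]. Qed.

Lemma sqnorm_cauchy_schwarz u v : bform 1%:M u v ^+ 2 <= sqnorm u * sqnorm v.
Proof. by rewrite !sqnormE; apply: psd_cauchy_schwarz psd1. Qed.

Lemma bform_sum (s : seq 'cV[R]_d) (F : 'cV[R]_d -> 'M[R]_d) u v :
  bform (\sum_(x <- s) F x) u v = \sum_(x <- s) bform (F x) u v.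
Proof.
elim: s => [|x s IHs]; first by rewrite !big_nil /bform mulmx0 mul0mx mxE.
by rewrite !big_cons bform_addmx IHs.
Qed.

Lemma mxtrace_outer_mul x A : \tr (x *m x^T *m A) = bform A x x.
Proof. by rewrite -mulmxA mxtrace_mulC trace_mx11. Qed.

Lemma mxtraceE A : \tr A = \sum_i bform A (delta_mx i 0) (delta_mx i 0).
Proof. by apply: eq_bigr => i _; rewrite bform_delta. Qed.

Lemma mxtrace_le A B : (forall v, bform A v v <= bform B v v) -> \tr A <= \tr B.
Proof. by move=> le_AB; rewrite !mxtraceE; apply: ler_sum => i _. Qed.

Lemma mxtrace_psd_ge0 A : psdmx A -> 0 <= \tr A.
Proof. by move=> hA; rewrite mxtraceE sumr_ge0 // => i _; apply: psd_bform_ge0. Qed.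

Lemma mxtrace_psd_mul_ge0 A B : psdmx A -> (forall v, 0 <= bform B v v) ->
  0 <= \tr (A *m B).
Proof.
move=> /psd_sum_outer[s ->] B_ge0; rewrite mulmx_suml raddf_sum sumr_ge0 // => x _.
by rewrite /= mxtrace_outer_mul.
Qed.

Lemma mxtrace_psd_mul_le A B lam : psdmx A -> (forall v, bform B v v <= lam * sqnorm v) ->
  \tr (A *m B) <= lam * \tr A.
Proof.
move=> hA le_B; have := @mxtrace_psd_mul_ge0 A (lam *: 1%:M - B) hA.
rewrite mulmxBr raddfB /= -scalemxAr mulmx1 mxtraceZ subr_ge0; apply=> v.
by rewrite bform_submx bform_scalemx -sqnormE subr_ge0.
Qed.

Lemma psd_bform_le_mxtrace A v : psdmx A -> bform A v v <= \tr A * sqnorm v.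
Proof.
move=> /psd_sum_outer[s ->]; rewrite bform_sum raddf_sum mulr_suml ler_sum // => x _.
rewrite bform_outer (bform_sym _ x v symmx1) -expr2 -(mulmx1 (x *m x^T)).
by rewrite /= mxtrace_outer_mul mulrC -sqnormE sqnorm_cauchy_schwarz.
Qed.

(* Cauchy-Schwarz for [B] at [(v, B v)] bounds [|B v|^4] by [lam^2 |v|^2 |B v|^2]. *)
Lemma psd_sqnorm_mul_le B lam v : psdmx B ->
  (forall w, bform B w w <= lam * sqnorm w) -> sqnorm (B *m v) <= lam ^+ 2 * sqnorm v.
Proof.
move=> hB le_B; set y := B *m v.
have Bvy : bform B v y = sqnorm y by rewrite /sqnorm /y trmx_mul hB.1 /bform mulmxA.
have := psd_cauchy_schwarz _ v y hB; rewrite Bvy => hcs.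
have h2 : sqnorm y ^+ 2 <= (lam * sqnorm v) * (lam * sqnorm y).
  exact: le_trans hcs (ler_pM (psd_bform_ge0 _ _ hB) (psd_bform_ge0 _ _ hB) (le_B v) (le_B y)).
have [->|y_neq0] := eqVneq (sqnorm y) 0.
  by rewrite mulr_ge0 ?sqr_ge0 ?sqnorm_ge0.
have y_gt0 : 0 < sqnorm y by rewrite lt_def y_neq0 sqnorm_ge0.
rewrite -(ler_pM2r y_gt0) -expr2; lra.
Qed.

Lemma psd_sqnorm_mul_le_mxtrace A tau v : psdmx A -> \tr A <= tau ->
  sqnorm (A *m v) <= tau ^+ 2 * sqnorm v.
Proof.
move=> hA trA_le; have trA_ge0 := mxtrace_psd_ge0 _ hA.
apply: le_trans (psd_sqnorm_mul_le _ _ v hA (fun w => psd_bform_le_mxtrace _ w hA)) _.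
by rewrite ler_wpM2r ?sqnorm_ge0 // lerXn2r ?nnegrE // (le_trans trA_ge0).
Qed.

Lemma sqnorm_mul_le_mxtrace B v : sqnorm (B *m v) <= \tr (B^T *m B) * sqnorm v.
Proof.
have -> : sqnorm (B *m v) = bform (B^T *m 1%:M *m B) v v by rewrite -bform_congr sqnormE.
by rewrite mulmx1 psd_bform_le_mxtrace //; have := psd_congr B _ psd1; rewrite mulmx1.
Qed.

Lemma sqnorm_eq1 v : vnorm v = 1 -> sqnorm v = 1.
Proof. by move=> v1; rewrite -[sqnorm v]sqr_sqrtr ?sqnorm_ge0 // -/(vnorm v) v1 expr1n. Qed.

Let unit_images B := [set vnorm (B *m v) | v in [set v : 'cV[R]_d | vnorm v = 1]].

Lemma unit_images_ubound B : has_ubound (unit_images B).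
Proof.
exists (Num.sqrt (\tr (B^T *m B))) => _ [v /sqnorm_eq1 v1 <-].
by rewrite ler_wsqrtr // -[X in _ <= X]mulr1 -v1 sqnorm_mul_le_mxtrace.
Qed.

Lemma spec_norm_ge0 B : 0 <= spec_norm B.
Proof.
rewrite /spec_norm -/(unit_images B).
have [[x Bx]|/nonemptyPn->] := pselect (unit_images B !=set0); last by rewrite sup0.
by apply: le_trans (ub_le_sup (unit_images_ubound B) Bx); case: Bx => v _ <-; apply: sqrtr_ge0.
Qed.

Lemma sqnorm_mul_le_spec_norm B u : sqnorm (B *m u) <= spec_norm B ^+ 2 * sqnorm u.
Proof.
have [u0|u_neq0] := eqVneq (sqnorm u) 0.
  by have := sqnorm_mul_le_mxtrace B u; rewrite u0 !mulr0.
have u_gt0 : 0 < sqnorm u by rewrite lt_def u_neq0 sqnorm_ge0.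
pose w := (Num.sqrt (sqnorm u))^-1 *: u.
have w1 : sqnorm w = 1 by rewrite sqnormZ exprVn sqr_sqrtr ?sqnorm_ge0 // mulVf.
have Bw : unit_images B (vnorm (B *m w)).
  by exists w => //=; rewrite /vnorm -/(sqnorm w) w1 sqrtr1.
have := ub_le_sup (unit_images_ubound B) Bw; rewrite -/(spec_norm B).
rewrite -ler_sqr ?nnegrE ?sqrtr_ge0 ?spec_norm_ge0 // sqr_sqrtr ?sqnorm_ge0 //.
rewrite -/(sqnorm _) /w -scalemxAr sqnormZ exprVn sqr_sqrtr ?sqnorm_ge0 //.
by rewrite ler_pdivrMl // mulrC.
Qed.

Lemma spec_norm_le B lam : 0 <= lam -> (forall v, sqnorm (B *m v) <= lam ^+ 2 * sqnorm v) ->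
  spec_norm B <= lam.
Proof.
move=> lam_ge0 le_B; rewrite /spec_norm -/(unit_images B).
have [Bne|/nonemptyPn->] := pselect (unit_images B !=set0); last by rewrite sup0.
apply: ge_sup Bne _ => _ [v /sqnorm_eq1 v1 <-].
rewrite -(ger0_norm lam_ge0) -sqrtr_sqr ler_wsqrtr //.
by have := le_B v; rewrite v1 mulr1.
Qed.

Lemma psd_spec_norm_le B lam : psdmx B -> 0 <= lam ->
  (forall v, bform B v v <= lam * sqnorm v) -> spec_norm B <= lam.
Proof. by move=> hB lam_ge0 le_B; apply: spec_norm_le => // v; apply: psd_sqnorm_mul_le. Qed.

Lemma bform_le_spec_norm B u : bform B u u <= spec_norm B * sqnorm u.
Proof.
have Bu_ge0 := mulr_ge0 (spec_norm_ge0 B) (sqnorm_ge0 u).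
have -> : bform B u u = bform 1%:M u (B *m u) by rewrite -bform_mulmxr mul1mx.
apply: le_trans (ler_norm _) _.
rewrite -ler_sqr ?nnegrE // real_normK ?num_real //; apply: le_trans (sqnorm_cauchy_schwarz _ _) _.
have := sqnorm_mul_le_spec_norm B u; have := sqnorm_ge0 u; nra.
Qed.

Lemma mxtrace_mul_le_spec_norm B F : psdmx F -> \tr (B *m F) <= spec_norm B * \tr F.
Proof.
move=> /psd_sum_outer[s ->]; rewrite mulmx_sumr !raddf_sum mulr_sumr ler_sum //= => x _.
rewrite mxtrace_mulC mxtrace_outer_mul -[x *m x^T]mulmx1 mxtrace_outer_mul -sqnormE.
exact: bform_le_spec_norm.
Qed.

Lemma posdef_psd {A} : posdefmx A -> psdmx A.
Proof.
case=> symA A_gt0; split=> // v; have [->|v_neq0] := eqVneq v 0.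
  by rewrite qformE bform0l.
exact: ltW (A_gt0 v v_neq0).
Qed.

Lemma posdef1 : posdefmx (1%:M : 'M[R]_d).
Proof. by split=> [|v /sqnorm_gt0]; [exact: symmx1 | rewrite /qform mulmx1]. Qed.

Lemma posdef_unitmx {A} : posdefmx A -> A \in unitmx.
Proof.
case=> _ A_gt0; rewrite unitmxE unitfE; apply/negP => /det0P[v v_neq0 vA0].
have vT_neq0 : v^T != 0 by apply: contra v_neq0 => /eqP v0; rewrite -[v]trmxK v0 trmx0.
by have := A_gt0 _ vT_neq0; rewrite /qform trmxK vA0 mul0mx mxE ltxx.
Qed.

Lemma bform_invmx A v : posdefmx A ->
  bform A (invmx A *m v) (invmx A *m v) = bform (invmx A) v v.
Proof.
move=> hA; rewrite bform_congr trmx_inv hA.1 -mulmxA mulmxV ?mulmx1 //.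
exact: posdef_unitmx.
Qed.

Lemma posdef_inv A : posdefmx A -> posdefmx (invmx A).
Proof.
move=> hA; split=> [|v v_neq0]; first by rewrite /symmx trmx_inv hA.1.
rewrite qformE -bform_invmx //; apply: hA.2; apply: contra v_neq0 => /eqP Av0.
by rewrite -[v]mul1mx -(mulmxV (posdef_unitmx hA)) -mulmxA Av0 mulmx0.
Qed.

Lemma posdef_add A B : posdefmx A -> psdmx B -> posdefmx (A + B).
Proof.
move=> hA hB; split=> [|v v_neq0]; first by rewrite /symmx linearD /= hA.1 hB.1.
by rewrite qformE bform_addmx ltr_wpDr ?psd_bform_ge0 //; apply: hA.2.
Qed.

Lemma posdef_scale a A : 0 < a -> posdefmx A -> posdefmx (a *: A).
Proof.
move=> a_gt0 hA; split=> [|v v_neq0]; first by rewrite /symmx linearZ /= hA.1.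
by rewrite qformE bform_scalemx mulr_gt0 //; apply: hA.2.
Qed.

Lemma posdef_congr B A : posdefmx B -> posdefmx A -> posdefmx (B^T *m A *m B).
Proof.
move=> hB hA; split=> [|v v_neq0]; first exact: (psd_congr B _ (posdef_psd hA)).1.
rewrite qformE -bform_congr; apply: hA.2; apply/negP => /eqP Bv0.
by have := hB.2 v v_neq0; rewrite /qform -mulmxA Bv0 mulmx0 mxE ltxx.
Qed.

(* Positivity of [B] at [A^-1 v - B^-1 v], combined with [B <= A] at [A^-1 v]. *)
Lemma posdef_inv_le A B : posdefmx A -> posdefmx B ->
  (forall v, bform B v v <= bform A v v) ->
  forall v, bform (invmx A) v v <= bform (invmx B) v v.
Proof.
move=> hA hB le_BA v; set w := invmx A *m v; set z := invmx B *m v.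
have Bwz : bform B w z = bform (invmx A) v v.
  rewrite /w /z /bform -mulmxA (mulmxA B) mulmxV ?posdef_unitmx // mul1mx.
  by rewrite trmx_mul trmx_inv hA.1.
have := psd_bform_ge0 _ (w + (-1) *: z) (posdef_psd hB).
rewrite bform_expand; last exact: hB.1.
rewrite Bwz /z bform_invmx // sqrrN expr1n.
have := le_BA w; rewrite /w bform_invmx //; lra.
Qed.

Lemma invmx_resolvent A B D t : A \in unitmx -> B \in unitmx -> B = A + t *: D ->
  invmx A - invmx B = t *: (invmx A *m D *m invmx A)
                      - t ^+ 2 *: (invmx A *m D *m invmx B *m D *m invmx A).
Proof.
move=> uA uB eB; have BA : B - A = t *: D by rewrite eB addrAC subrr add0r.
have invBl : invmx A - invmx B = t *: (invmx A *m D *m invmx B).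
  rewrite scalemxAl scalemxAr -BA.
  by rewrite mulmxBr mulmxBl mulVmx // mul1mx -mulmxA mulmxV // mulmx1.
have invBr : invmx A - invmx B = t *: (invmx B *m D *m invmx A).
  rewrite scalemxAl scalemxAr -BA.
  by rewrite mulmxBr mulmxBl mulVmx // mul1mx -mulmxA mulmxV // mulmx1.
have ADB : invmx A *m D *m invmx B
    = invmx A *m D *m invmx A - invmx A *m D *m (t *: (invmx B *m D *m invmx A)).
  by rewrite -invBr mulmxBr opprB addrC subrK.
by rewrite invBl {1}ADB scalerBr -scalemxAr scalerA -expr2 !mulmxA.
Qed.

Lemma invmx_right_inv A B : A *m B = 1%:M -> invmx A = B.
Proof.
move=> AB1; have [uA _] := mulmx1_unit AB1.
by rewrite -[invmx A]mulmx1 -AB1 mulmxA mulVmx // mul1mx.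
Qed.

Lemma exists_posdef_mxtrace_le tau : 0 < tau -> exists F : 'M[R]_d, posdefmx F /\ \tr F <= tau.
Proof.
move=> tau_gt0; exists ((tau / d.+1%:R) *: 1%:M); split.
  by apply: posdef_scale posdef1; rewrite divr_gt0.
by rewrite mxtraceZ mxtrace1 -mulrA ger_pMr // mulrC ler_pdivrMr // mul1r ler_nat.
Qed.

End MatrixInequalities.

Section Duality.
Context {R : realType} {d : nat}.
Variables (T P : 'M[R]_d).
Hypotheses (psdT : psdmx T) (pdP : posdefmx P).
Implicit Types (A F H : 'M[R]_d) (v : 'cV[R]_d).

Let N := invmx P.
Let W F := invmx (F + N).
Let U := N *m T *m N.

Definition bias_mx A := (1%:M - A)^T *m T *m (1%:M - A).

Let pdN : posdefmx N. Proof. exact: posdef_inv. Qed.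

Let psdU : psdmx U.
Proof. by have := psd_congr N _ psdT; rewrite pdN.1. Qed.

Let pd_addN {F} : posdefmx F -> posdefmx (F + N).
Proof. by move=> pdF; apply: posdef_add pdF (posdef_psd pdN). Qed.

Let pdW {F} : posdefmx F -> posdefmx (W F).
Proof. by move=> pdF; apply/posdef_inv/pd_addN. Qed.

Let mulmxW {F} : posdefmx F -> (F + N) *m W F = 1%:M.
Proof. by move=> pdF; apply: mulmxV; apply/posdef_unitmx/pd_addN. Qed.

Let mulWmx {F} : posdefmx F -> W F *m (F + N) = 1%:M.
Proof. by move=> pdF; apply: mulVmx; apply/posdef_unitmx/pd_addN. Qed.

Let mulmxFW {F} : posdefmx F -> F *m W F = 1%:M - N *m W F.
Proof. by move=> pdF; apply/eqP; rewrite eq_sym subr_eq -mulmxDl mulmxW. Qed.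

Let mulmxWF {F} : posdefmx F -> W F *m F = 1%:M - W F *m N.
Proof. by move=> pdF; apply/eqP; rewrite eq_sym subr_eq -mulmxDr mulWmx. Qed.

Lemma invmx_invmx_add F : posdefmx F -> invmx (invmx F + P) = N - N *m W F *m N.
Proof.
move=> pdF; apply: invmx_right_inv.
have -> : N - N *m W F *m N = F *m W F *m N by rewrite mulmxFW // mulmxBl mul1mx.
rewrite mulmxDl !mulmxA mulVmx ?posdef_unitmx // mul1mx.
rewrite -!mulmxA [F *m _]mulmxA mulmxFW // mulmxBl mul1mx mulmxBr !mulmxA.
by rewrite mulmxV ?posdef_unitmx // mul1mx addrC subrK.
Qed.

(* Completing the square in [A]; the second summand vanishes at [A = F W F]. *)
Lemma bias_variance_square F A : posdefmx F ->
  (1%:M - A) *m F *m (1%:M - A)^T + A *m N *m A^T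
  = (N - N *m W F *m N) + (A - F *m W F) *m (F + N) *m (A - F *m W F)^T.
Proof.
move=> pdF; have symW : (W F)^T = W F := (pdW pdF).1; have symF : F^T = F := pdF.1.
have FWF : F *m (W F *m F) = F - N + N *m W F *m N.
  rewrite mulmxA mulmxFW // mulmxBl mul1mx -(mulmxA N (W F) F) mulmxWF // mulmxBr mulmx1 mulmxA.
  by rewrite opprB addrA addrAC.
have -> : (A - F *m W F)^T = A^T - W F *m F by rewrite linearB /= trmx_mul symW symF.
have -> : (A - F *m W F) *m (F + N) = A *m (F + N) - F.
  by rewrite mulmxBl -mulmxA mulWmx // mulmx1.
have AFNWF : A *m (F + N) *m (W F *m F) = A *m F.
  by rewrite mulmxA -(mulmxA A) mulmxW // mulmx1.
rewrite [(A *m (F + N) - F) *m _]mulmxBl !mulmxBr AFNWF FWF mulmxDr mulmxDl.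
rewrite linearB /= trmx1 mul1mx !mulmxDl !mulmxBr !mulmx1 !mulNmx.
move: (A *m F *m A^T) (A *m N *m A^T) (N *m W F *m N) (A *m F) (F *m A^T) => X1 X2 X3 X4 X5.
by apply/matrixP => i j; rewrite !mxE; ring.
Qed.

Let objective F := \tr (T *m invmx (invmx F + P)).

Lemma objectiveE F : posdefmx F -> objective F = \tr (T *m N) - \tr (U *m W F).
Proof.
move=> pdF; rewrite /objective invmx_invmx_add // mulmxBr raddfB /=; congr (_ - _).
by rewrite /U !mulmxA mxtrace_mulC !mulmxA.
Qed.

Lemma objective_le_mxtrace F : posdefmx F -> objective F <= \tr (T *m N).
Proof.
move=> pdF; rewrite objectiveE // gerBl mxtrace_psd_mul_ge0 // => v.
exact/psd_bform_ge0/posdef_psd/pdW.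
Qed.

Lemma mxtrace_bias_variance F A :
  \tr (T *m ((1%:M - A) *m F *m (1%:M - A)^T + A *m N *m A^T))
  = \tr (bias_mx A *m F) + \tr (T *m (A *m N *m A^T)).
Proof. by rewrite mulmxDr raddfD /= /bias_mx !mulmxA mxtrace_mulC !mulmxA. Qed.

Lemma objective_le_bias_variance tau F A : posdefmx F -> \tr F <= tau ->
  objective F <= tau * spec_norm (bias_mx A) + \tr (T *m (A *m N *m A^T)).
Proof.
move=> pdF trF_le; set E := A - F *m W F.
have sq_ge0 : 0 <= \tr (T *m (E *m (F + N) *m E^T)).
  apply: mxtrace_psd_mul_ge0 => // v; apply: psd_bform_ge0.
  by have := psd_congr E^T _ (posdef_psd (pd_addN pdF)); rewrite trmxK.
rewrite /objective invmx_invmx_add //.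
apply: (le_trans (y := \tr (T *m (N - N *m W F *m N)) + \tr (T *m (E *m (F + N) *m E^T)))).
  by rewrite lerDl.
rewrite -raddfD /= -mulmxDr -bias_variance_square // mxtrace_bias_variance lerD2r.
apply: (le_trans (mxtrace_mul_le_spec_norm _ _ (posdef_psd pdF))).
by rewrite mulrC ler_wpM2r ?spec_norm_ge0.
Qed.

Lemma objective_at_FW F : posdefmx F ->
  objective F = \tr (bias_mx (F *m W F) *m F) + \tr (T *m (F *m W F *m N *m (F *m W F)^T)).
Proof.
by move=> pdF; rewrite -mxtrace_bias_variance bias_variance_square // subrr !mul0mx addr0
  /objective invmx_invmx_add.
Qed.

Lemma mxtrace_bias_FW F X : posdefmx F ->
  \tr (bias_mx (F *m W F) *m X) = \tr (U *m (W F *m X *m W F)).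
Proof.
move=> pdF; have NW : 1%:M - F *m W F = N *m W F by rewrite mulmxFW // opprB addrC subrK.
by rewrite /bias_mx NW trmx_mul (pdW pdF).1 pdN.1 /U -!mulmxA mxtrace_mulC !mulmxA.
Qed.

Lemma mxtrace_W_le F : posdefmx F -> \tr (W F) <= \tr P.
Proof.
move=> pdF; apply: mxtrace_le => v; rewrite -[P]invmxK; apply: posdef_inv_le => // [|w].
  exact: pd_addN.
by rewrite -/N bform_addmx lerDr; apply/psd_bform_ge0/posdef_psd.
Qed.

(* A bound on the second-order term [t^2 <U, W0 D Wt D W0>] of the resolvent
   expansion, uniform over the feasible set [\tr F <= tau]. *)
Let curvature tau := \tr U * (\tr P ^+ 3 * (4 * tau ^+ 2)).

Let curvature_ge0 tau : 0 <= curvature tau.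
Proof.
have trP_ge0 := mxtrace_psd_ge0 _ (posdef_psd pdP).
have trU_ge0 := mxtrace_psd_ge0 _ psdU.
by apply: mulr_ge0 trU_ge0 (mulr_ge0 (exprn_ge0 _ trP_ge0) _); rewrite mulr_ge0 ?sqr_ge0.
Qed.

Lemma second_order_le tau F0 Ft H : posdefmx F0 -> posdefmx Ft -> psdmx H ->
  \tr F0 <= tau -> \tr H <= tau ->
  \tr (U *m (W F0 *m (H - F0) *m W Ft *m (H - F0) *m W F0)) <= curvature tau.
Proof.
move=> pdF0 pdFt psdH trF0_le trH_le; set D := H - F0.
rewrite /curvature mulrC; apply: mxtrace_psd_mul_le psdU _ => v.
have symD : D^T = D by rewrite linearB /= psdH.1 pdF0.1.
have -> : W F0 *m D *m W Ft *m D *m W F0 = (D *m W F0)^T *m W Ft *m (D *m W F0).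
  by rewrite trmx_mul symD (pdW pdF0).1 !mulmxA.
rewrite -bform_congr -mulmxA.
have trP_ge0 := mxtrace_psd_ge0 _ (posdef_psd pdP).
have le_Wt := psd_bform_le_mxtrace _ (D *m (W F0 *m v)) (posdef_psd (pdW pdFt)).
have le_D : sqnorm (D *m (W F0 *m v)) <= 4 * tau ^+ 2 * sqnorm (W F0 *m v).
  rewrite /D mulmxBl; apply: le_trans (sqnorm_sub_le _ _) _.
  have := psd_sqnorm_mul_le_mxtrace _ _ (W F0 *m v) psdH trH_le.
  have := psd_sqnorm_mul_le_mxtrace _ _ (W F0 *m v) (posdef_psd pdF0) trF0_le; lra.
have le_W0 := psd_sqnorm_mul_le_mxtrace _ _ v (posdef_psd (pdW pdF0)) (mxtrace_W_le _ pdF0).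
apply: le_trans le_Wt _; apply: le_trans (ler_wpM2r (sqnorm_ge0 _) (mxtrace_W_le _ pdFt)) _.
apply: le_trans (ler_wpM2l trP_ge0 le_D) _.
have -> : \tr P ^+ 3 * (4 * tau ^+ 2) * sqnorm v
    = \tr P * (4 * tau ^+ 2) * (\tr P ^+ 2 * sqnorm v) by ring.
have c_ge0 : 0 <= \tr P * (4 * tau ^+ 2) by rewrite mulr_ge0 // mulr_ge0 ?sqr_ge0.
have := ler_wpM2l c_ge0 le_W0; lra.
Qed.

Section NearOptimal.
Variables (tau V : R).
Hypothesis objective_le : forall F, posdefmx F -> \tr F <= tau -> objective F <= V.

(* Compare [F0] with the feasible point [F0 + t (H - F0)] and expand
   [W] at [F0] with [invmx_resolvent]. *)
Lemma first_order_le eps t F0 H : posdefmx F0 -> \tr F0 <= tau -> psdmx H -> \tr H <= tau ->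
  0 < t -> t < 1 -> V - eps < objective F0 ->
  t * (\tr (bias_mx (F0 *m W F0) *m H) - \tr (bias_mx (F0 *m W F0) *m F0))
    <= eps + t ^+ 2 * curvature tau.
Proof.
move=> pdF0 trF0_le psdH trH_le t_gt0 t_lt1 near_opt.
set D := H - F0; set Ft := F0 + t *: D.
have FtE : Ft = (1 - t) *: F0 + t *: H by apply/matrixP => i j; rewrite !mxE; ring.
have pdFt : posdefmx Ft.
  rewrite FtE; apply: posdef_add; first by apply: posdef_scale => //; lra.
  exact: psd_scale (ltW t_gt0) psdH.
have trFt_le : \tr Ft <= tau.
  by rewrite FtE raddfD /= !mxtraceZ; have := mxtrace_psd_ge0 _ psdH; nra.
have := objective_le _ pdFt trFt_le; rewrite objectiveE //.
move: near_opt; rewrite objectiveE //.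
have FtN : Ft + N = (F0 + N) + t *: D by rewrite /Ft addrAC.
have resolvent := invmx_resolvent _ _ _ _ (posdef_unitmx (pd_addN pdF0))
  (posdef_unitmx (pd_addN pdFt)) FtN.
have WtE : \tr (U *m W F0) - \tr (U *m W Ft) = t * \tr (U *m (W F0 *m D *m W F0))
    - t ^+ 2 * \tr (U *m (W F0 *m D *m W Ft *m D *m W F0)).
  by rewrite -raddfB /= -mulmxBr resolvent mulmxBr raddfB /= -!scalemxAr !mxtraceZ.
have biasD : \tr (bias_mx (F0 *m W F0) *m H) - \tr (bias_mx (F0 *m W F0) *m F0)
    = \tr (U *m (W F0 *m D *m W F0)) by rewrite -raddfB /= -mulmxBr mxtrace_bias_FW.
rewrite biasD.
have := ler_wpM2l (sqr_ge0 t) (second_order_le _ _ _ _ pdF0 pdFt psdH trF0_le trH_le); lra.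
Qed.

Hypothesis tau_gt0 : 0 < tau.

Let psd_bias A : psdmx (bias_mx A).
Proof. exact: psd_congr. Qed.

(* [first_order_le] at the rank-one point [H = tau / |v|^2 v v^T]. *)
Lemma near_optimal_bform_le eps t F0 v : posdefmx F0 -> \tr F0 <= tau ->
  0 < t -> t < 1 -> V - eps < objective F0 ->
  tau * bform (bias_mx (F0 *m W F0)) v v
    <= (\tr (bias_mx (F0 *m W F0) *m F0) + (eps + t ^+ 2 * curvature tau) / t) * sqnorm v.
Proof.
move=> pdF0 trF0_le t_gt0 t_lt1 near_opt; set B0 := bias_mx _.
have [v0|v_neq0] := eqVneq (sqnorm v) 0.
  have := psd_bform_le_mxtrace _ v (psd_bias (F0 *m W F0)); rewrite v0 !mulr0 => Bv_le0.
  by rewrite pmulr_rle0.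
have v_gt0 : 0 < sqnorm v by rewrite lt_def v_neq0 sqnorm_ge0.
pose H := (tau / sqnorm v) *: (v *m v^T).
have psdH : psdmx H by apply: psd_scale (psd_outer v); rewrite divr_ge0 ?ltW.
have trH_le : \tr H <= tau.
  by rewrite mxtraceZ -[v *m v^T]mulmx1 mxtrace_outer_mul -sqnormE divfK ?gt_eqF.
have := first_order_le _ _ _ _ pdF0 trF0_le psdH trH_le t_gt0 t_lt1 near_opt.
have -> : \tr (B0 *m H) = tau / sqnorm v * bform B0 v v.
  by rewrite -scalemxAr mxtraceZ mxtrace_mulC mxtrace_outer_mul.
rewrite -ler_pdivlMl // mulrC => le_first.
rewrite -ler_pdivrMr // mulrAC; lra.
Qed.

Lemma near_optimal_bias_le delta : 0 < delta -> exists2 eps, 0 < eps &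
  forall F0, posdefmx F0 -> \tr F0 <= tau -> V - eps < objective F0 ->
  tau * spec_norm (bias_mx (F0 *m W F0)) <= \tr (bias_mx (F0 *m W F0) *m F0) + delta.
Proof.
move=> delta_gt0; set C := curvature tau + 1.
have C_gt0 : 0 < C by rewrite ltr_pwDr ?curvature_ge0.
set t := Num.min (1 / 2) (delta / (2 * C)).
have t_gt0 : 0 < t by rewrite lt_min divr_gt0 //= divr_gt0 // mulr_gt0.
have t_lt1 : t < 1 by rewrite gt_min ltr_pdivrMr //; lra.
have tC_le : t * C <= delta / 2.
  have : t <= delta / (2 * C) by rewrite ge_min lexx orbT.
  by rewrite ler_pdivlMr ?mulr_gt0 // => ?; rewrite ler_pdivlMr //; lra.
exists (delta * t / 2); first by rewrite divr_gt0 // mulr_gt0.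
move=> F0 pdF0 trF0_le near_opt; set B0 := bias_mx _.
have trBF_ge0 : 0 <= \tr (B0 *m F0).
  by apply: mxtrace_psd_mul_ge0 (psd_bias _) _ => v; apply/psd_bform_ge0/posdef_psd.
have lam_ge0 : 0 <= (\tr (B0 *m F0) + delta) / tau by rewrite divr_ge0 ?addr_ge0 // ltW.
rewrite mulrC -ler_pdivlMr //; apply: (psd_spec_norm_le _ _ (psd_bias _) lam_ge0) => v.
rewrite mulrAC ler_pdivlMr // mulrC.
apply: (le_trans (near_optimal_bform_le _ _ _ v pdF0 trF0_le t_gt0 t_lt1 near_opt)).
apply: ler_wpM2r; first exact: sqnorm_ge0.
rewrite lerD2l ler_pdivrMr //.
have := ler_wpM2l (ltW t_gt0) tC_le; have := sqr_ge0 t; rewrite /C; lra.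
Qed.
End NearOptimal.

Lemma objective_sup_eq_inf tau : 0 < tau ->
  sup [set objective F | F in [set F | posdefmx F /\ \tr F <= tau]]
  = inf [set tau * spec_norm (bias_mx A) + \tr (T *m (A *m N *m A^T)) | A in [set: 'M[R]_d]].
Proof.
move=> tau_gt0; set Sup := [set _ | _ in _]; set Inf := [set _ | _ in _].
have [F1 feasF1] := @exists_posdef_mxtrace_le R d _ tau_gt0.
have Sup_ne : Sup !=set0 by exists (objective F1); exists F1.
have Sup_ub : has_ubound Sup.
  by exists (\tr (T *m N)) => _ [F [pdF _] <-]; apply: objective_le_mxtrace.
have objective_le_sup F : posdefmx F -> \tr F <= tau -> objective F <= sup Sup.
  by move=> pdF trF_le; apply: (ub_le_sup Sup_ub); exists F.
have Inf_ne : Inf !=set0 by exists (tau * spec_norm (bias_mx 0) + \tr (T *m (0 *m N *m 0^T))); exists 0.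
have Inf_lb : has_lbound Inf.
  exists 0 => _ [A _ <-]; apply: addr_ge0; first by rewrite mulr_ge0 ?spec_norm_ge0 // ltW.
  apply: (mxtrace_psd_mul_ge0 _ _ psdT) => v; apply: psd_bform_ge0.
  by have := psd_congr A^T _ (posdef_psd pdN); rewrite trmxK.
apply/eqP; rewrite eq_le; apply/andP; split.
  apply: lb_le_inf Inf_ne _ => _ [A _ <-]; apply: ge_sup Sup_ne _ => _ [F [pdF trF_le] <-].
  exact: objective_le_bias_variance.
apply/ler_addgt0Pr => delta delta_gt0.
have [eps eps_gt0 bias_le] := near_optimal_bias_le _ _ objective_le_sup tau_gt0 _ delta_gt0.
have [_ [F0 [pdF0 trF0_le] <-] near_opt] := sup_adherent eps_gt0 (conj Sup_ne Sup_ub).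
apply: le_trans (ge_inf Inf_lb _) _; first by exists (F0 *m W F0).
have := bias_le F0 pdF0 trF0_le near_opt; have := objective_le_sup F0 pdF0 trF0_le.
rewrite objective_at_FW //; lra.
Qed.

End Duality.

Theorem theorem3 (R : realType) (d : nat) (S M T Mih : 'M[R]_d) (sigma : R) (n : nat) :
  posdefmx S -> posdefmx M -> psdmx T -> 0 < sigma -> (1 <= n)%N ->
  posdefmx Mih -> Mih *m Mih = invmx M ->
  let S' := Mih *m S *m Mih in
  let T' := Mih *m T *m Mih in
  sup [set frob T' (invmx (invmx F + (n%:R / sigma ^+ 2) *: S'))
        | F in [set F : 'M[R]_d | posdefmx F /\ \tr F <= (pi ^+ 2)^-1]]
  = inf [set (pi ^+ 2)^-1 * spec_norm ((1%:M - A)^T *m T' *m (1%:M - A))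
              + (sigma ^+ 2 / n%:R) * frob T' (A *m invmx S' *m A^T)
        | A in [set: 'M[R]_d]].
Proof.
move=> pdS _ psdT sigma_gt0 n_ge1 pdMih _ S' T'.
have symMih : Mih^T = Mih := pdMih.1.
have pdS' : posdefmx S' by have := posdef_congr _ _ pdMih pdS; rewrite symMih.
have psdT' : psdmx T' by have := psd_congr Mih _ psdT; rewrite symMih.
have c_gt0 : 0 < n%:R / sigma ^+ 2 :> R by rewrite divr_gt0 ?ltr0n // exprn_gt0.
have pdP := posdef_scale _ _ c_gt0 pdS'.
have tau_gt0 : 0 < (pi ^+ 2)^-1 :> R by rewrite invr_gt0 exprn_gt0 // pi_gt0.
have frobT' X : frob T' X = \tr (T' *m X) by apply: frob_sym psdT'.1.
rewrite (eq_imagel (fun F _ => frobT' _)) objective_sup_eq_inf //.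
congr inf; apply: eq_imagel => A _; congr (_ + _).
by rewrite frobT' invmxZ ?posdef_unitmx // invf_div -scalemxAr -scalemxAl -scalemxAr mxtraceZ.
Qed.
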